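(* Let $n\geq1$ and let $H$ be an irreducible subgroup of $SL(n,\mathbb{C})$. Then the order $n_{Z_n(H),\phi_H}$ of the Lagrangians of the associated alternate module $(Z_n(H),\phi_H)$ divides $n$.
   Context: Let $\xi=e^{2\pi i/n}$ and $\pi_n:SL(n,\mathbb{C})\to PSL(n,\mathbb{C})$. A subgroup of $SL(n,\mathbb{C})$ is irreducible if no nonzero proper subspace of $\mathbb{C}^n$ is invariant. $Z_n(H)=Z_{PSL(n,\mathbb{C})}(\pi_n(H))$, $U_n(H)=\pi_n^{-1}(Z_n(H))$, and $\phi_H(a,b)=k/n\in\mathbb{Q}/\mathbb{Z}$ where $\hat a\hat b\hat a^{-1}\hat b^{-1}=\xi^kI_n$ for lifts $\hat a,\hat b\in U_n(H)$. An alternate module is a finite abelian group $A$ with biadditive $\phi:A\times A\to\mathbb{Q}/\mathbb{Z}$, $\phi(a,a)=0$; its radical is $K_\phi=\{a:\phi(a,\cdot)=0\}$; a subgroup $L$ is Lagrangian if $L^\perp=L$, where $L^\perp=\{a:\phi(a,l)=0\ \forall l\in L\}$. All Lagrangians have the same order $n_{A,\phi}=\sqrt{|A||K_\phi|}$. *)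

From HB Require Import structures.
From mathcomp Require Import all_boot all_order all_algebra.
Set Implicit Arguments. Unset Strict Implicit. Unset Printing Implicit Defensive.
Import Order.TTheory GRing.Theory Num.Theory.
Local Open Scope ring_scope.

(* The field C is modelled by an arbitrary numClosedFieldType R
   (algebraically closed, characteristic 0). *)

Section Defs.
Variables (R : numClosedFieldType) (n : nat).
Local Notation M := 'M[R]_n.

Definition inSL (g : M) : Prop := \det g = 1.

Definition SL_subgroup (H : M -> Prop) : Prop :=
  [/\ H 1%:M,
      (forall g h, H g -> H h -> H (g *m h)),
      (forall g, H g -> H (invmx g)) &
      (forall g, H g -> inSL g)].

Definition irreducible_subgroup (H : M -> Prop) : Prop :=
  forall U : M, (forall h, H h -> (U *m h <= U)%MS) ->
    \rank U = 0%N \/ \rank U = n.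

(* Kernel of pi_n : SL -> PSL is the group of scalar matrices c I with c^n = 1;
   g and g' have the same image in PSL(n,R) iff g' = c g with c^n = 1. *)
Definition samePSL (g g' : M) : Prop :=
  exists c : R, c ^+ n = 1 /\ g' = c *: g.

(* U_n(H) = pi_n^{-1}(Z_PSL(pi_n(H))):  g in SL with pi(g) pi(h) = pi(h) pi(g)
   for every h in H, i.e. g h = c h g with c I in the kernel of pi_n. *)
Definition U_n (H : M -> Prop) (g : M) : Prop :=
  inSL g /\ forall h, H h -> exists c : R, c ^+ n = 1 /\ g *m h = c *: (h *m g).

(* phi_H(pi a, pi b) = 0 in Q/Z  iff  the commutator of the lifts is xi^k I
   with k = 0 mod n, i.e. iff the lifts commute. *)
Definition phiH_zero (a b : M) : Prop := a *m b = b *m a.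

(* Preimage in U_n(H) of the radical K_{phi_H} of (Z_n(H), phi_H). *)
Definition radical_pre (H : M -> Prop) (g : M) : Prop :=
  U_n H g /\ forall g', U_n H g' -> phiH_zero g g'.

(* The quotient (P / E) is finite with exactly N classes: there is a
   transversal of size N. *)
Definition card_quot (P : M -> Prop) (E : M -> M -> Prop) (N : nat) : Prop :=
  exists s : seq M,
    [/\ size s = N,
        (forall x, x \in s -> P x),
        (forall x, P x -> exists2 y, y \in s & E y x) &
        (forall i j, (i < N)%N -> (j < N)%N -> E (nth 0 s i) (nth 0 s j) -> i = j)].

Definition card_Z (H : M -> Prop) (N : nat) : Prop := card_quot (U_n H) samePSL N.
Definition card_K (H : M -> Prop) (N : nat) : Prop :=
  card_quot (radical_pre H) samePSL N.

(* n_{A,phi} = sqrt(|A| |K_phi|) for (A,phi) = (Z_n(H), phi_H) is the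
   natural number m: m * m = |Z_n(H)| * |K_{phi_H}|. *)
Definition lagrangian_order (H : M -> Prop) (m : nat) : Prop :=
  exists NA NK : nat, [/\ card_Z H NA, card_K H NK & (m * m = NA * NK)%N].

End Defs.

From HB Require Import structures.
From mathcomp Require Import all_boot all_order all_algebra.
From mathcomp Require Import zify boolp.
Set Implicit Arguments. Unset Strict Implicit. Unset Printing Implicit Defensive.
Import Order.TTheory GRing.Theory Num.Theory.
Local Open Scope ring_scope.

(* Let G = U_n(H), so that Z_n(H) = G / mu_n. Since H is irreducible, Schur's lemma
   makes every element of the commutant of H a scalar; hence two elements of G commute
   up to an n-th root of unity, and an element of G that is not scalar has trace 0.
   Take a minimal nonzero G-stable subspace W, of dimension d, and let rho be the
   (irreducible, projective) action of G on W. The orthogonality relation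
   sum_(g in Z) tr rho(g) tr rho(g^-1) = |Z|, in which only the radical K contributes,
   each term being d^2, gives |Z| = |K| d^2; thus the Lagrangian order is m = |K| d.
   Elements of the radical act on W by scalars psi(g), and the average e of
   psi(g)^-1 g over K is an idempotent commuting with G whose trace is n / |K|, so
   n = |K| rank e. Finally C^n is the sum of the H-translates of W, which are G-stable
   of dimension d; by minimality the rank of their images under e adds up to a
   multiple of d, so d divides rank e and m divides n. *)

(* The rank factorisation e = C B of an idempotent satisfies B C = 1. *)
Lemma mxtrace_idem (F : fieldType) m (e : 'M[F]_m) : e *m e = e -> \tr e = (\rank e)%:R.
Proof.
move=> ee; have Cfree : row_free (col_base e)^T.
  by rewrite /row_free mxrank_tr; exact: col_base_full.
have Bfree := row_base_free e; have eCB := mulmx_base e.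
move: (col_base e) (row_base e) eCB Cfree Bfree => C B eCB Cfree Bfree.
have BC1 : B *m C = 1%:M.
  apply: (row_free_inj Bfree); apply: trmx_inj; rewrite !trmx_mul.
  apply: (row_free_inj Cfree); rewrite -!trmx_mul mul1mx; congr (_^T).
  by rewrite !mulmxA eCB -mulmxA eCB ee.
by rewrite -{1}eCB mxtrace_mulC BC1 mxtrace1.
Qed.

Lemma mxtrace_qcomm_eq0 (F : idomainType) m (A B : 'M[F]_m) c :
  A \in unitmx -> c != 1 -> B *m A = c *: (A *m B) -> \tr B = 0.
Proof.
move=> uA c1 BA; have conjB : invmx A *m (B *m A) = c *: B.
  by rewrite BA -scalemxAr mulmxA mulVmx // mul1mx.
have : \tr B = c * \tr B.
  by rewrite -mxtraceZ -conjB mxtrace_mulC -mulmxA mulmxV // mulmx1.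
move/eqP; rewrite -subr_eq0 -{1}[\tr B]mul1r -mulrBl mulf_eq0 subr_eq0 eq_sym.
by rewrite (negPf c1) => /eqP.
Qed.

Lemma qcommM (F : comRingType) m (A B C : 'M[F]_m) a b :
  A *m C = a *: (C *m A) -> B *m C = b *: (C *m B) ->
  A *m B *m C = (a * b) *: (C *m (A *m B)).
Proof.
move=> AC BC.
by rewrite -mulmxA BC -scalemxAr (mulmxA A C) AC -scalemxAl scalerA mulrC -mulmxA.
Qed.

Lemma mul_delta_mxE (F : ringType) m (A C : 'M[F]_m) a b i j :
  (A *m delta_mx a b *m C) i j = A i a * C b j.
Proof.
rewrite mxE (bigD1 b) //= big1 ?addr0 => [|k kb]; last first.
  rewrite mxE (bigD1 a) //= big1 ?addr0 => [|l la]; last by rewrite mxE (negPf la) mulr0.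
  by rewrite mxE (negPf kb) andbF mulr0 mul0r.
rewrite mxE (bigD1 a) //= big1 ?addr0 => [|l la]; last by rewrite mxE (negPf la) mulr0.
by rewrite mxE !eqxx mulr1.
Qed.

Lemma scalar_mx_inj (F : ringType) m (a b : F) : (0 < m)%N -> (a%:M : 'M[F]_m) = b%:M -> a = b.
Proof. by move=> m_gt0 /matrixP/(_ (Ordinal m_gt0) (Ordinal m_gt0)); rewrite !mxE eqxx. Qed.

Lemma invmxM (F : comUnitRingType) m (A B : 'M[F]_m) : A \in unitmx -> B \in unitmx ->
  invmx (A *m B) = invmx B *m invmx A.
Proof.
move=> uA uB; have uAB : A *m B \in unitmx by rewrite unitmx_mul uA.
apply: (can_inj (mulKmx uAB)).
by rewrite mulmxV // -mulmxA (mulmxA B) mulmxV // mul1mx mulmxV.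
Qed.

Lemma irreducible_commutant_scalar (F : closedFieldType) m (P : 'M[F]_m -> Prop) :
  (0 < m)%N ->
  (forall U : 'M_m, (forall p, P p -> (U *m p <= U)%MS) -> \rank U = 0%N \/ \rank U = m) ->
  forall X, (forall p, P p -> X *m p = p *m X) -> exists c, X = c%:M.
Proof.
case: m P => [//|m] P _ irrP X XP.
have : size (char_poly X) != 1%N by rewrite size_char_poly.
case/closed_rootP => c; rewrite -eigenvalue_root_char => eigc.
exists c; apply/eqP; rewrite -subr_eq0 -mxrank_eq0.
have stable_eigen p : P p -> stablemx (eigenspace X c) p.
  by move=> Pp; apply: comm_mx_stable_eigenspace; exact: XP.
case: (irrP _ stable_eigen) => [r0|].
  by move: eigc; rewrite /eigenvalue -mxrank_eq0 r0.
rewrite mxrank_ker => rker; apply/eqP; have := rank_leq_row (X - c%:M).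
move: rker; move: (\rank _) => r; lia.
Qed.


Section CentralizerPreimage.
Variables (R : numClosedFieldType) (n : nat) (H : 'M[R]_n -> Prop).
Hypotheses (n_gt0 : (0 < n)%N) (subH : SL_subgroup H) (irrH : irreducible_subgroup H).
Local Notation M := 'M[R]_n.
Local Notation G := (U_n H).
Local Notation K := (radical_pre H).

Lemma inSL_unit (g : M) : inSL g -> g \in unitmx.
Proof. by rewrite /inSL unitmxE => ->; rewrite unitr1. Qed.

Lemma H_unit h : H h -> h \in unitmx.
Proof. by case: subH => _ _ _ SLH /SLH /inSL_unit. Qed.

Lemma U_n_unit g : G g -> g \in unitmx.
Proof. by case=> /inSL_unit. Qed.

Lemma root_unity_neq0 (c : R) : c ^+ n = 1 -> c != 0.
Proof. by apply: contra_eqN => /eqP->; rewrite expr0n gtn_eqF // eq_sym oner_eq0. Qed.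

Lemma root_unityV (c : R) : c ^+ n = 1 -> c^-1 ^+ n = 1.
Proof. by rewrite exprVn => ->; rewrite invr1. Qed.

Lemma root_unityM (a b : R) : a ^+ n = 1 -> b ^+ n = 1 -> (a * b) ^+ n = 1.
Proof. by rewrite exprMn => -> ->; rewrite mulr1. Qed.

Lemma U_n1 : G 1%:M.
Proof.
split=> [|h _]; first by rewrite /inSL det1.
by exists 1; rewrite expr1n mul1mx mulmx1 scale1r.
Qed.

Lemma U_nM g g' : G g -> G g' -> G (g *m g').
Proof.
case=> SLg twg [SLg' twg']; split=> [|h Hh]; first by rewrite /inSL det_mulmx SLg SLg' mulr1.
have [a [a1 ga]] := twg h Hh; have [b [b1 gb]] := twg' h Hh.
by exists (a * b); rewrite root_unityM ?(qcommM ga gb).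
Qed.

Lemma U_nV g : G g -> G (invmx g).
Proof.
move=> [SLg twg]; have ug := inSL_unit SLg.
split=> [|h Hh]; first by rewrite /inSL det_inv SLg invr1.
have [a [a1 ga]] := twg h Hh; exists a^-1; split; first exact: root_unityV.
apply: (canLR (mulKmx ug)); rewrite -scalemxAr mulmxA ga -scalemxAl scalerA.
by rewrite mulVf ?scale1r ?mulmxK // root_unity_neq0.
Qed.

Lemma U_nZ g c : G g -> c ^+ n = 1 -> G (c *: g).
Proof.
move=> [SLg twg] c1; split=> [|h Hh]; first by rewrite /inSL detZ SLg c1 mulr1.
have [a [a1 ga]] := twg h Hh; exists a; split=> //.
by rewrite -scalemxAl ga -scalemxAr !scalerA mulrC.
Qed.

Lemma samePSL_refl (g : M) : samePSL g g.
Proof. by exists 1; rewrite expr1n scale1r. Qed.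

Lemma samePSL_sym (g g' : M) : samePSL g g' -> samePSL g' g.
Proof.
case=> c [c1 ->]; exists c^-1; split; first exact: root_unityV.
by rewrite scalerA mulVf ?scale1r // root_unity_neq0.
Qed.

Lemma samePSL_trans (g g' g'' : M) : samePSL g g' -> samePSL g' g'' -> samePSL g g''.
Proof.
by case=> a [a1 ->] [b [b1 ->]]; exists (b * a); rewrite root_unityM ?scalerA.
Qed.

Lemma H_commutant_scalar (X : M) :
  (forall h, H h -> X *m h = h *m X) -> exists c, X = c%:M.
Proof. exact: irreducible_commutant_scalar n_gt0 irrH X. Qed.

Lemma samePSL_mulV_scalar (g g' : M) c : G g -> G g' -> g *m invmx g' = c%:M ->
  samePSL g' g.
Proof.
move=> Gg Gg' gg'c; exists c; split.
  have := congr1 determinant gg'c.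
  by rewrite det_mulmx det_inv (proj1 Gg) (proj1 Gg') invr1 mulr1 det_scalar.
by rewrite -[g](mulmxKV (U_n_unit Gg')) gg'c mul_scalar_mx.
Qed.

(* P Q^-1 commutes with H, hence is a scalar by Schur's lemma. *)
Lemma samePSL_same_twist (P Q : M) : G P -> G Q ->
  (forall h, H h -> exists c,
     [/\ c ^+ n = 1, P *m h = c *: (h *m P) & Q *m h = c *: (h *m Q)]) ->
  samePSL Q P.
Proof.
move=> GP GQ twPQ; have uQ := U_n_unit GQ.
have [l PQl] : exists l, P *m invmx Q = l%:M.
  apply: H_commutant_scalar => h Hh; have [c [c1 Ph Qh]] := twPQ h Hh.
  have Qih : h *m invmx Q = c *: (invmx Q *m h).
    by rewrite -[h *m _](mulKmx uQ) (mulmxA Q h) Qh -scalemxAl mulmxK // -scalemxAr.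
  apply: (scalerI (root_unity_neq0 c1)).
  by rewrite -mulmxA scalemxAr -Qih (mulmxA P h) Ph -scalemxAl mulmxA.
exact: samePSL_mulV_scalar PQl.
Qed.

Lemma U_n_comm g g' : G g -> G g' -> samePSL (g' *m g) (g *m g').
Proof.
move=> Gg Gg'; apply: samePSL_same_twist; [exact: U_nM | exact: U_nM |] => h Hh.
have [a [a1 ga]] := proj2 Gg h Hh; have [b [b1 gb]] := proj2 Gg' h Hh.
by exists (a * b); rewrite root_unityM ?(qcommM ga gb) ?(qcommM gb ga) 1?mulrC.
Qed.

Lemma mxtrace_U_n_nonscalar g : G g -> (forall c, g <> c%:M) -> \tr g = 0.
Proof.
move=> Gg gNscalar.
have [/H_commutant_scalar [c gc]|] := pselect (forall h, H h -> g *m h = h *m g).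
  by case: (gNscalar c).
move=> /existsNP [h /not_implyP [Hh gNh]]; have [c [_ gh]] := proj2 Gg h Hh.
apply: (mxtrace_qcomm_eq0 (H_unit Hh) _ gh).
by apply: contra_notN gNh => /eqP c1; rewrite gh c1 scale1r.
Qed.

Lemma mxtrace_U_n_div g g' : G g -> G g' -> ~ samePSL g' g -> \tr (g *m invmx g') = 0.
Proof.
move=> Gg Gg' gNg'; apply: mxtrace_U_n_nonscalar => [|c gg'c].
  by apply: U_nM; last exact: U_nV.
exact/gNg'/(samePSL_mulV_scalar Gg Gg' gg'c).
Qed.

Lemma samePSL_scalar_mx a b : G a%:M -> G b%:M -> samePSL (a%:M : M) b%:M.
Proof.
move=> Ga Gb; apply: (samePSL_mulV_scalar (c := b / a) Gb Ga).
by rewrite invmx_scalar mul_scalar_mx scale_scalar_mx.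
Qed.

Definition PSL_distinct (P : M -> Prop) (s : seq M) :=
  [/\ uniq s, forall x, x \in s -> P x & {in s &, forall x y, samePSL x y -> x = y}].

Definition transversal (P : M -> Prop) (s : seq M) :=
  PSL_distinct P s /\ forall x, P x -> exists2 y, y \in s & samePSL y x.

Lemma card_quot_transversal P s : transversal P s -> card_quot P (@samePSL R n) (size s).
Proof.
case=> [[us Ps injs] covs]; exists s; split=> // i j ilt jlt ij.
by apply/eqP; rewrite -(nth_uniq 0 ilt jlt us) (injs _ _ _ _ ij) ?mem_nth.
Qed.

Lemma PSL_distinct_cons P s x : PSL_distinct P s -> P x ->
  (forall y, y \in s -> ~ samePSL y x) -> PSL_distinct P (x :: s).
Proof.
case=> us Ps injs Px xNs; split.
- by rewrite /= us andbT; apply/negP => xs; exact: xNs xs (samePSL_refl x).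
- by move=> y; rewrite inE => /predU1P[-> | /Ps].
move=> y z; rewrite !inE => /predU1P[-> | ys] /predU1P[-> | zs] //.
- by move/samePSL_sym/(xNs _ zs).
- by move/(xNs _ ys).
- exact: injs.
Qed.

(* Traces against the inverses of the other members show that the members are
   linearly independent in 'M_n. *)
Lemma size_PSL_distinct_U_n s : PSL_distinct G s -> (size s <= n * n)%N.
Proof.
case=> us Gs injs; have s_mem (i : 'I_(size s)) : s`_i \in s := mem_nth 0 (ltn_ord i).
have Gsj (i : 'I_(size s)) : G s`_i := Gs _ (s_mem i).
suff /eqP <- : free (in_tuple s) by apply: leq_trans (dimvS (subvf _)) _; rewrite dimvf.
apply/freeP => k sum0 j.
have := congr1 (fun X => \tr (X *m invmx s`_j)) sum0.
rewrite mul0mx linear0 mulmx_suml raddf_sum (bigD1 j) //= big1 => [|i ij]; last first.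
  rewrite -scalemxAl mxtraceZ (mxtrace_U_n_div (Gsj i) (Gsj j)) ?mulr0 //.
  move=> /(injs _ _ (s_mem j) (s_mem i)) ji; move/eqP: ij; apply; apply/val_inj/eqP.
  by rewrite -(nth_uniq 0 (ltn_ord i) (ltn_ord j) us) ji.
rewrite -scalemxAl mulmxV ?U_n_unit // mxtraceZ mxtrace1 addr0 => /eqP.
by rewrite mulf_eq0 pnatr_eq0 gtn_eqF //= orbF => /eqP.
Qed.

Lemma exists_transversal : exists s, transversal G s.
Proof.
pose sizes k := `[< exists2 s, PSL_distinct G s & size s = k >].
have sizes0 : sizes 0%N by apply/asboolP; exists [::].
have sizes_ub k : sizes k -> (k <= n * n)%N.
  by move=> /asboolP [s /size_PSL_distinct_U_n + <-].
case: (ex_maxnP (ex_intro sizes _ sizes0) sizes_ub) => k /asboolP [s ds sk] kmax.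
exists s; split=> // x Gx; apply: contrapT => xNs.
have : sizes (size s).+1.
  apply/asboolP; exists (x :: s) => //; apply: PSL_distinct_cons => // y ys yx.
  by apply: xNs; exists y.
by move/kmax; rewrite sk ltnn.
Qed.

Lemma transversal_filter P s : transversal G s -> (forall x, P x -> G x) ->
  (forall c x, c ^+ n = 1 -> P (c *: x) -> P x) ->
  transversal P [seq x <- s | `[< P x >]].
Proof.
move=> [[us Gs injs] covs] PG Pscale; split; first split.
- exact: filter_uniq.
- by move=> x; rewrite mem_filter => /andP[/asboolP].
- by move=> x y; rewrite !mem_filter => /andP[_ xs] /andP[_ ys]; apply: injs.
move=> x Px; have [y ys [c [c1 xE]]] := covs x (PG x Px).
exists y; last by exists c.
by rewrite mem_filter ys andbT; apply/asboolP; apply: Pscale c1 _; rewrite -xE.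
Qed.

Lemma sum_transversal_translate (V : zmodType) P s (f : M -> M) (F : M -> V) :
  transversal P s -> (forall g, g \in s -> P (f g)) ->
  {in s &, forall g1 g2, samePSL (f g1) (f g2) -> g1 = g2} ->
  (forall c y, c ^+ n = 1 -> P y -> F (c *: y) = F y) ->
  \sum_(g <- s) F (f g) = \sum_(g <- s) F g.
Proof.
move=> [[us Ps injs] covs] Pf injf Finv.
pose rep y := nth 0 s (find (fun z => `[< samePSL z y >]) s).
have repP y : P y -> rep y \in s /\ samePSL (rep y) y.
  move=> Py; have [z zs zy] := covs y Py.
  have hs : has (fun z => `[< samePSL z y >]) s by apply/hasP; exists z => //; apply/asboolP.
  by split; [rewrite mem_nth // -has_find | apply/asboolP; exact: (nth_find 0 hs)].
have -> : \sum_(g <- s) F (f g) = \sum_(g <- s) F (rep (f g)).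
  apply: eq_big_seq => g gs; have [rs [c [c1 fgE]]] := repP _ (Pf g gs).
  by rewrite {1}fgE Finv //; apply: Ps.
have rep_inj : {in s &, injective (rep \o f)}.
  move=> g1 g2 g1s g2s /= r12; apply: injf => //.
  apply: samePSL_trans (samePSL_sym (repP _ (Pf g1 g1s)).2) _.
  by rewrite r12; exact: (repP _ (Pf g2 g2s)).2.
have uniq_rep : uniq (map (rep \o f) s) by rewrite map_inj_in_uniq.
rewrite -(big_map (rep \o f) xpredT F); apply/perm_big/uniq_perm => //.
apply: (uniq_min_size uniq_rep _ _).2; last by rewrite size_map.
by move=> _ /mapP [g gs ->]; exact: (repP _ (Pf g gs)).1.
Qed.

Lemma samePSL_mul2l (x g1 g2 : M) : x \in unitmx ->
  samePSL (x *m g1) (x *m g2) -> samePSL g1 g2.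
Proof.
move=> ux [c [c1 xg]]; exists c; split=> //.
by apply: (can_inj (mulKmx ux)); rewrite xg -scalemxAr.
Qed.

Lemma samePSL_mul2r (x g1 g2 : M) : x \in unitmx ->
  samePSL (g1 *m x) (g2 *m x) -> samePSL g1 g2.
Proof.
move=> ux [c [c1 gx]]; exists c; split=> //.
by apply: (can_inj (mulmxK ux)); rewrite gx -scalemxAl.
Qed.

Lemma radical_pre1 : K 1%:M.
Proof. by split=> [|x _]; [exact: U_n1 | rewrite /phiH_zero mul1mx mulmx1]. Qed.

Lemma radical_preM g g' : K g -> K g' -> K (g *m g').
Proof.
case=> Gg gC [Gg' g'C]; split=> [|x Gx]; first exact: U_nM.
by rewrite /phiH_zero -mulmxA g'C // !mulmxA gC.
Qed.

Lemma radical_preV g : K g -> K (invmx g).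
Proof.
case=> Gg gC; split=> [|x Gx]; first exact: U_nV.
have ug := U_n_unit Gg; rewrite /phiH_zero.
by apply: (canLR (mulKmx ug)); rewrite mulmxA gC // mulmxK.
Qed.

Lemma radical_preZ c g : c ^+ n = 1 -> K (c *: g) <-> K g.
Proof.
have scale a x : a ^+ n = 1 -> K x -> K (a *: x).
  move=> a1 [Gx xC]; split=> [|y Gy]; first exact: U_nZ.
  by rewrite /phiH_zero -scalemxAl -scalemxAr xC.
move=> c1; split=> [/(scale _ _ (root_unityV c1))|]; last exact: scale.
by rewrite scalerA mulVf ?scale1r // root_unity_neq0.
Qed.

Definition U_n_stable m (U : 'M_(m, n)) := forall g, G g -> stablemx U g.

Lemma U_n_stable_cap m1 m2 (U : 'M_(m1, n)) (V : 'M_(m2, n)) :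
  U_n_stable U -> U_n_stable V -> U_n_stable (U :&: V)%MS.
Proof.
move=> stU stV g Gg; rewrite sub_capmx (submx_trans (submxMr g (capmxSl U V))) ?stU //.
by rewrite (submx_trans (submxMr g (capmxSr U V))) ?stV.
Qed.

Lemma U_n_stable_mul_comm m (U : 'M_(m, n)) (e : M) :
  (forall g, G g -> e *m g = g *m e) -> U_n_stable U -> U_n_stable (U *m e).
Proof. by move=> eC stU g Gg; rewrite -mulmxA eC // mulmxA submxMr // stU. Qed.

Lemma U_n_stable_translate (W : M) h : U_n_stable W -> H h -> U_n_stable (W *m h).
Proof.
move=> stW Hh g Gg; have [c [c1 gh]] := proj2 Gg h Hh.
have hg : h *m g = c^-1 *: (g *m h).
  by rewrite gh scalerA mulVf ?scale1r // root_unity_neq0.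
by rewrite -mulmxA hg -scalemxAr scalemx_sub // mulmxA submxMr // stW.
Qed.

Lemma U_n_stable_translates (W : M) (l : seq M) : U_n_stable W ->
  (forall h, h \in l -> H h) -> U_n_stable (\sum_(h <- l) W *m h)%MS.
Proof.
move=> stW; elim: l => [|a l IHl] Hl; first by rewrite big_nil => g _; exact: stable0mx.
move=> g Gg; rewrite big_cons stableDmx //.
  by apply: U_n_stable_translate => //; apply: Hl; rewrite inE eqxx.
by apply: IHl => // h hl; apply: Hl; rewrite inE hl orbT.
Qed.

Lemma exists_translates_full (W : M) : W != 0 ->
  exists2 l : seq M, (forall h, h \in l -> H h) & \rank (\sum_(h <- l) W *m h)%MS = n.
Proof.
move=> W0; have [H1 HM _ _] := subH.
pose ranks r := `[< exists2 l : seq M, (forall h, h \in l -> H h)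
                                     & \rank (\sum_(h <- l) W *m h)%MS = r >].
have ranks0 : ranks 0%N by apply/asboolP; exists [::]; rewrite ?big_nil ?mxrank0.
have ranks_ub r : ranks r -> (r <= n)%N by move=> /asboolP [l _ <-]; exact: rank_leq_col.
case: (ex_maxnP (ex_intro ranks _ ranks0) ranks_ub) => r /asboolP [l Hl rl] rmax.
exists l => //; set T := (\sum_(h <- l) W *m h)%MS in rl *.
have WhT h : H h -> (W *m h <= T)%MS.
  move=> Hh; apply: contraT => WhNT.
  have ltT : (T < W *m h + T)%MS by rewrite ltmxEneq addsmxSr addsmx_sub submx_refl andbT.
  have : ranks (\rank (W *m h + T)%MS).
    apply/asboolP; exists (h :: l); last by rewrite big_cons.
    by move=> h'; rewrite inE => /predU1P [-> | /Hl].
  by move/rmax; rewrite -rl leqNgt; move: ltT; rewrite ltmxErank => /andP [_ ->].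
have stT h' : H h' -> stablemx T h'.
  move=> Hh'; rewrite {1}/T big_seq.
  apply: (big_ind (fun X : M => X *m h' <= T)%MS) => [|A C sA sC|a].
  - by rewrite mul0mx sub0mx.
  - by rewrite addsmxMr addsmx_sub sA.
  - by move=> al; rewrite -mulmxA WhT //; apply: HM => //; apply: Hl.
case: (irrH stT) => // T0; have := mxrankS (WhT _ H1).
by rewrite T0 mulmx1 leqn0 mxrank_eq0 (negPf W0).
Qed.

Lemma exists_minimal_stable : exists d (B : 'M_(d, n)),
  [/\ row_free B, U_n_stable B, (0 < d)%N &
       forall m (U : 'M_(m, n)), U_n_stable U -> U != 0 -> (d <= \rank U)%N].
Proof.
pose ranks k := `[< exists U : M, [/\ U_n_stable U, U != 0 & \rank U = k] >].
have ranks_n : ranks n.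
  apply/asboolP; exists 1%:M; split; last exact: mxrank1.
  - by move=> g _; exact: submx1.
  - by rewrite -mxrank_eq0 mxrank1 -lt0n.
case: (ex_minnP (ex_intro ranks _ ranks_n)) => k /asboolP [W [stW W0 <-]] kmin.
exists (\rank W), (row_base W); split.
- exact: row_base_free.
- by move=> g Gg; rewrite stablemx_row_base stW.
- by rewrite lt0n mxrank_eq0.
move=> m U stU U0; rewrite -(mxrank_gen U); apply/kmin/asboolP.
exists <<U>>%MS; split; last by [].
- by move=> g Gg; rewrite (eqmx_stable _ (genmxE U)) stU.
- by rewrite -mxrank_eq0 mxrank_gen mxrank_eq0.
Qed.

Section MinimalStable.
Variables (d : nat) (B : 'M[R]_(d, n)).
Hypotheses (freeB : row_free B) (stB : U_n_stable B) (d_gt0 : (0 < d)%N)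
  (Bmin : forall m (U : 'M_(m, n)), U_n_stable U -> U != 0 -> (d <= \rank U)%N).

Lemma rank_minimal_stable m (U : 'M_(m, n)) : U_n_stable U -> (\rank U <= d)%N ->
  \rank U = 0%N \/ \rank U = d.
Proof.
move=> stU Ud; have [-> | U0] := eqVneq U 0; first by left; rewrite mxrank0.
by right; apply/eqP; rewrite eqn_leq Ud Bmin.
Qed.

Definition rho (g : M) : 'M[R]_d := B *m g *m pinvmx B.

Lemma rho_base g : G g -> rho g *m B = B *m g.
Proof. by move=> Gg; rewrite mulmxKpV // stB. Qed.

Lemma rhoM g g' : G g -> G g' -> rho (g *m g') = rho g *m rho g'.
Proof.
move=> Gg Gg'; apply: (row_free_inj freeB).
by rewrite /= (rho_base (U_nM Gg Gg')) -mulmxA (rho_base Gg') !mulmxA rho_base.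
Qed.

Lemma rho1 : rho 1%:M = 1%:M.
Proof.
by apply: (row_free_inj freeB); rewrite /= (rho_base U_n1) mul1mx mulmx1.
Qed.

Lemma rhoZ c g : rho (c *: g) = c *: rho g.
Proof. by rewrite /rho -scalemxAr -scalemxAl. Qed.

Lemma rho_mulV g : G g -> rho g *m rho (invmx g) = 1%:M.
Proof. by move=> Gg; rewrite -(rhoM Gg (U_nV Gg)) mulmxV ?U_n_unit ?rho1. Qed.

Lemma rho_Vmul g : G g -> rho (invmx g) *m rho g = 1%:M.
Proof. by move=> Gg; rewrite -(rhoM (U_nV Gg) Gg) mulVmx ?U_n_unit ?rho1. Qed.

Lemma rho_unit g : G g -> rho g \in unitmx.
Proof. by move/rho_mulV/mulmx1_unit => []. Qed.

(* A rho(G)-stable Y pulls back to the U_n(H)-stable subspace Y *m B. *)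
Lemma rho_irreducible (Y : 'M_d) :
  (forall p, (exists2 g, G g & p = rho g) -> stablemx Y p) ->
  \rank Y = 0%N \/ \rank Y = d.
Proof.
move=> stY; have rYB : \rank (Y *m B) = \rank Y by rewrite mxrankMfree.
rewrite -rYB; apply: rank_minimal_stable.
  by move=> g Gg; rewrite -mulmxA -rho_base // mulmxA submxMr // stY //; exists g.
by rewrite (leq_trans (mxrankM_maxl _ _)) // rank_leq_row.
Qed.

Lemma rho_commutant_scalar (X : 'M_d) :
  (forall g, G g -> X *m rho g = rho g *m X) -> exists c, X = c%:M.
Proof.
move=> XC; apply: (irreducible_commutant_scalar d_gt0 rho_irreducible).
by move=> _ [g Gg ->]; exact: XC.
Qed.

Definition psi (g : M) : R := \tr (rho g) / d%:R.

Lemma rho_radical g : K g -> rho g = (psi g)%:M.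
Proof.
case=> Gg gC; have [c rhoc] : exists c, rho g = c%:M.
  by apply: rho_commutant_scalar => x Gx; rewrite -!rhoM // gC.
by rewrite /psi rhoc mxtrace_scalar -[c *+ d]mulr_natr mulfK // pnatr_eq0 -lt0n d_gt0.
Qed.

Lemma mxtrace_rho_nonradical g : G g -> ~ K g -> \tr (rho g) = 0.
Proof.
move=> Gg /not_andP [//|/existsNP [x /not_implyP [Gx gNx]]].
have [l [_ gx]] := U_n_comm Gg Gx.
apply: (mxtrace_qcomm_eq0 (rho_unit Gx)); last by rewrite -!rhoM // gx rhoZ.
by apply: contra_notN gNx => /eqP l1; rewrite /phiH_zero gx l1 scale1r.
Qed.

Lemma psiZ c g : psi (c *: g) = c * psi g.
Proof. by rewrite /psi rhoZ mxtraceZ mulrA. Qed.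

Lemma psi1 : psi 1%:M = 1.
Proof. by rewrite /psi rho1 mxtrace1 divff // pnatr_eq0 -lt0n d_gt0. Qed.

Lemma psiM g g' : K g -> K g' -> psi (g *m g') = psi g * psi g'.
Proof.
move=> Kg Kg'; apply: (scalar_mx_inj d_gt0).
rewrite -(rho_radical (radical_preM Kg Kg')) (rhoM (proj1 Kg) (proj1 Kg')).
by rewrite (rho_radical Kg) (rho_radical Kg') mul_scalar_mx scale_scalar_mx.
Qed.

Lemma psi_neq0 g : K g -> psi g != 0.
Proof.
move=> Kg; apply/eqP => psi0; have := psiM Kg (radical_preV Kg).
rewrite (mulmxV (U_n_unit (proj1 Kg))) psi1 psi0 mul0r => /eqP.
by rewrite oner_eq0.
Qed.

Section Transversal.
Variable s : seq M.
Hypothesis trs : transversal G s.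

Definition twirl (E : 'M_d) : 'M_d := \sum_(g <- s) rho g *m E *m rho (invmx g).

Lemma twirl_comm E x : G x -> rho x *m twirl E = twirl E *m rho x.
Proof.
move=> Gx; have [[_ Gs injs] _] := trs; have ux := U_n_unit Gx.
pose F y := rho y *m E *m rho (invmx y).
have -> : rho x *m twirl E = (\sum_(g <- s) F (x *m g)) *m rho x.
  rewrite /twirl mulmx_sumr mulmx_suml; apply: eq_big_seq => g /Gs Gg.
  rewrite /F (invmxM ux (U_n_unit Gg)) (rhoM Gx Gg) (rhoM (U_nV Gg) (U_nV Gx)).
  rewrite -(mulmxA _ (rho (invmx g) *m _)) -(mulmxA (rho (invmx g))) (rho_Vmul Gx).
  by rewrite mulmx1 (mulmxA (rho x)) (mulmxA (rho x)).
congr (_ *m _); rewrite /twirl.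
apply: (sum_transversal_translate trs) => [g /Gs Gg | g1 g2 g1s g2s | c y c1 Gy].
- exact: U_nM.
- by move/(samePSL_mul2l ux)/(injs _ _ g1s g2s).
have ucy := U_n_unit (U_nZ Gy c1).
rewrite /F (invmxZ ucy) !rhoZ -!scalemxAl -scalemxAr scalerA.
by rewrite mulfV ?scale1r // root_unity_neq0.
Qed.

Lemma twirl_scalar E : twirl E = (\tr E * (size s)%:R / d%:R)%:M.
Proof.
have [[_ Gs _] _] := trs.
have [c twc] := rho_commutant_scalar (fun x Gx => esym (twirl_comm E Gx)).
have : \tr (twirl E) = \tr E * (size s)%:R.
  rewrite raddf_sum /= (eq_big_seq (fun=> \tr E)) => [|g /Gs Gg]; last first.
    by rewrite mxtrace_mulC mulmxA rho_Vmul // mul1mx.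
  by rewrite big_const_seq count_predT iter_addr_0 mulr_natr.
rewrite twc mxtrace_scalar => <-.
by rewrite -[c *+ d]mulr_natr mulfK // pnatr_eq0 -lt0n d_gt0.
Qed.

(* Schur orthogonality for tr rho, read off the twirls of the matrix units. *)
Lemma sum_mxtrace_rho_pair :
  \sum_(g <- s) \tr (rho g) * \tr (rho (invmx g)) = (size s)%:R.
Proof.
have trace_pair g : \tr (rho g) * \tr (rho (invmx g)) =
    \sum_a \sum_b (rho g *m delta_mx a b *m rho (invmx g)) a b.
  rewrite mulr_suml; apply: eq_bigr => a _.
  by rewrite mulr_sumr; apply: eq_bigr => b _; rewrite mul_delta_mxE.
rewrite (eq_bigr _ (fun g _ => trace_pair g)) exchange_big /=.
rewrite (eq_bigr (fun a => \sum_b (twirl (delta_mx a b)) a b)) => [|a _]; last first.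
  by rewrite exchange_big /=; apply: eq_bigr => b _; rewrite /twirl summxE.
rewrite (eq_bigr (fun=> (size s)%:R / d%:R)) => [|a _]; last first.
  rewrite (bigD1 a) //= big1 ?addr0 => [|b ba]; last first.
    by rewrite twirl_scalar mxE eq_sym (negPf ba) mulr0n.
  rewrite twirl_scalar mxE eqxx mulr1n /mxtrace (bigD1 a) //= big1 ?addr0 => [|i ia].
    by rewrite mxE !eqxx mul1r.
  by rewrite mxE (negPf ia).
by rewrite sumr_const card_ord -[_ *+ d]mulr_natr divfK // pnatr_eq0 -lt0n d_gt0.
Qed.

Definition radical_reps := [seq g <- s | `[< K g >]].
Local Notation k := (size radical_reps).

Lemma transversal_radical_reps : transversal K radical_reps.
Proof.
by apply: (transversal_filter trs) => [g [] | c g c1 /(radical_preZ g c1)].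
Qed.

Lemma mxtrace_rho_radical_pair g : K g ->
  \tr (rho g) * \tr (rho (invmx g)) = (d * d)%:R.
Proof.
move=> Kg; have := rho_mulV (proj1 Kg).
rewrite (rho_radical Kg) (rho_radical (radical_preV Kg)) mul_scalar_mx scale_scalar_mx.
move/(scalar_mx_inj d_gt0) => psi_inv.
by rewrite !mxtrace_scalar mulrnAl mulrnAr psi_inv -mulrnA.
Qed.

Lemma size_transversal : size s = (k * (d * d))%N.
Proof.
have [[_ Gs _] _] := trs.
apply/eqP; rewrite -(eqr_nat R) -sum_mxtrace_rho_pair.
rewrite (bigID (fun g => `[< K g >])) /= [X in _ + X]big1_seq ?addr0 => [|g]; last first.
  by case/andP => /asboolP gNK /Gs Gg; rewrite mxtrace_rho_nonradical ?mul0r.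
rewrite -big_filter (eq_big_seq (fun=> (d * d)%:R)) => [|g]; last first.
  by rewrite mem_filter => /andP [/asboolP Kg _]; exact: mxtrace_rho_radical_pair.
by rewrite big_const_seq count_predT iter_addr_0 [(k * _)%:R]natrM mulr_natl.
Qed.

Lemma radical_reps_scalar : exists2 g0, g0 \in radical_reps & exists c, g0 = c%:M.
Proof.
have [_ covK] := transversal_radical_reps.
have [g0 g0K [c [c1 g0c]]] := covK _ radical_pre1.
exists g0 => //; exists c^-1.
by rewrite -[g0]scale1r -(mulVf (root_unity_neq0 c1)) -scalerA -g0c scalemx1.
Qed.

Lemma size_radical_reps_gt0 : (0 < k)%N.
Proof. by have [g0 g0K _] := radical_reps_scalar; rewrite -has_predT; apply/hasP; exists g0. Qed.

Definition radical_idem : M := k%:R^-1 *: \sum_(g <- radical_reps) (psi g)^-1 *: g.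

Lemma radical_idem_comm x : G x -> radical_idem *m x = x *m radical_idem.
Proof.
move=> Gx; have [[_ Ks _] _] := transversal_radical_reps.
rewrite -scalemxAl -scalemxAr mulmx_suml mulmx_sumr; congr (_ *: _).
apply: eq_big_seq => g /Ks [_ gC]; rewrite -scalemxAl -scalemxAr.
by congr (_ *: _); exact: gC.
Qed.

(* Right translation by x permutes the PSL-classes of the radical, and
   g |-> psi(g)^-1 g is constant on each class. *)
Lemma radical_idem_mulr x : K x -> radical_idem *m x = psi x *: radical_idem.
Proof.
move=> Kx; have [[_ Ks injK] _] := transversal_radical_reps.
have ux := U_n_unit (proj1 Kx); pose F y := (psi y)^-1 *: y.
have translate : \sum_(g <- radical_reps) F (g *m x) = \sum_(g <- radical_reps) F g.
  apply: (sum_transversal_translate transversal_radical_reps).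
  - by move=> g /Ks Kg; exact: radical_preM.
  - by move=> g1 g2 g1s g2s /(samePSL_mul2r ux)/(injK _ _ g1s g2s).
  by move=> c y c1 _; rewrite /F psiZ invfM scalerA mulrAC mulVf ?mul1r // root_unity_neq0.
rewrite /radical_idem -scalemxAl mulmx_suml scalerA mulrC -scalerA; congr (_ *: _).
rewrite -translate scaler_sumr; apply: eq_big_seq => g /Ks Kg.
by rewrite /F psiM // scalerA [(psi g * _)^-1]invfM mulrCA mulfV ?mulr1 ?psi_neq0 // scalemxAl.
Qed.

Lemma radical_idem_idem : radical_idem *m radical_idem = radical_idem.
Proof.
have [[_ Ks _] _] := transversal_radical_reps.
rewrite {2}/radical_idem -scalemxAr mulmx_sumr.
rewrite (eq_big_seq (fun=> radical_idem)) => [|g /Ks Kg]; last first.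
  by rewrite -scalemxAr radical_idem_mulr // scalerA mulVf ?scale1r // psi_neq0.
rewrite big_const_seq count_predT iter_addr_0 -scaler_nat scalerA mulVf ?scale1r //.
by rewrite pnatr_eq0 -lt0n size_radical_reps_gt0.
Qed.

(* Only the one scalar matrix among the representatives has nonzero trace. *)
Lemma mxtrace_radical_idem : \tr radical_idem = n%:R / k%:R.
Proof.
have [[uK Ks injK] _] := transversal_radical_reps.
have [g0 g0K [c g0c]] := radical_reps_scalar; have Gg0 := proj1 (Ks _ g0K).
rewrite /radical_idem mxtraceZ raddf_sum /= (bigD1_seq g0) //= big1_seq ?addr0 => [|g]; last first.
  case/andP => gNg0 gK; have [Gg _] := Ks _ gK.
  rewrite mxtraceZ mxtrace_U_n_nonscalar ?mulr0 // => a ga.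
  move/eqP: gNg0; apply; apply: injK => //; rewrite ga g0c.
  by apply: samePSL_scalar_mx; rewrite -?g0c -?ga.
have c1 : c ^+ n = 1 by have := proj1 Gg0; rewrite /inSL g0c det_scalar.
have psi_g0 : psi g0 = c by rewrite g0c -scalemx1 psiZ psi1 mulr1.
rewrite psi_g0 g0c mxtraceZ mxtrace_scalar -[c *+ n]mulr_natr mulKf ?root_unity_neq0 //.
by rewrite mulrC.
Qed.

Lemma rank_radical_idem : (\rank radical_idem * k)%N = n.
Proof.
apply/eqP; rewrite -(eqr_nat R) natrM -mxtrace_idem ?radical_idem_idem //.
by rewrite mxtrace_radical_idem divfK // pnatr_eq0 -lt0n size_radical_reps_gt0.
Qed.

End Transversal.

Lemma dvdn_rank_stable_add m1 m2 (X : 'M_(m1, n)) (S : 'M_(m2, n)) :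
  U_n_stable X -> U_n_stable S -> (\rank X <= d)%N -> (d %| \rank S)%N ->
  (d %| \rank (X + S)%MS)%N.
Proof.
move=> stX stS Xd dS; have sum_cap := mxrank_sum_cap X S.
have capX : (\rank (X :&: S)%MS <= \rank X)%N by rewrite mxrankS ?capmxSl.
case: (rank_minimal_stable (U_n_stable_cap stX stS) (leq_trans capX Xd)) => cap.
  case: (rank_minimal_stable stX Xd) => rX; move: sum_cap; rewrite cap rX addn0 => ->.
    by rewrite add0n.
  by rewrite dvdn_add.
suff -> : \rank (X + S)%MS = \rank S by [].
by move: sum_cap capX Xd cap; move: (\rank _) (\rank _) (\rank _) (\rank _) => a b x y; lia.
Qed.

(* C^n is the sum of the translates W h (h in H) of W = <<B>>, each U_n(H)-stable of rank
   at most d, and so is its image under e. *)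
Lemma dvdn_rank_commutant (e : M) :
  (forall g, G g -> e *m g = g *m e) -> (d %| \rank e)%N.
Proof.
move=> eC; pose W := <<B>>%MS.
have stW : U_n_stable W by move=> g Gg; rewrite (eqmx_stable _ (genmxE B)) stB.
have rW : \rank W = d by rewrite mxrank_gen; apply/eqP.
have W0 : W != 0 by rewrite -mxrank_eq0 rW -lt0n.
have [l Hl Tfull] := exists_translates_full W0.
rewrite -(eqmxMfull e (_ : row_full (\sum_(h <- l) W *m h)%MS)) ?/row_full ?Tfull //.
elim: l Hl {Tfull} => [|a l IHl] Hl; first by rewrite big_nil mul0mx mxrank0 dvdn0.
have Ha : H a by apply: Hl; rewrite inE eqxx.
have Hl' h : h \in l -> H h by move=> hl; apply: Hl; rewrite inE hl orbT.
rewrite big_cons (addsmxMr (W *m a)) dvdn_rank_stable_add ?IHl //.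
- exact/U_n_stable_mul_comm/U_n_stable_translate.
- exact/U_n_stable_mul_comm/U_n_stable_translates.
- by rewrite -rW (leq_trans (mxrankM_maxl _ _)) ?mxrankM_maxl.
Qed.

End MinimalStable.

End CentralizerPreimage.

Theorem mainTheorem10 (R : numClosedFieldType) (n : nat) (H : 'M[R]_n -> Prop) :
  (0 < n)%N -> SL_subgroup H -> irreducible_subgroup H ->
  exists m : nat, lagrangian_order H m /\ (m %| n)%N.
Proof.
move=> n_gt0 subH irrH.
have [d [B [freeB stB d_gt0 Bmin]]] := exists_minimal_stable H n_gt0.
have [s trs] := exists_transversal n_gt0 subH irrH.
have sizeZ := size_transversal n_gt0 irrH freeB stB d_gt0 Bmin trs.
have rank_e := rank_radical_idem n_gt0 subH irrH freeB stB d_gt0 Bmin trs.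
have d_dvd_e := dvdn_rank_commutant n_gt0 subH irrH freeB stB d_gt0 Bmin
  (radical_idem_comm n_gt0 B trs).
set k := size (radical_reps H s) in sizeZ rank_e.
exists (k * d)%N; split; last by rewrite -rank_e mulnC dvdn_mul.
exists (size s), k; split; last by rewrite sizeZ; nia.
- exact: card_quot_transversal trs.
- exact: card_quot_transversal (transversal_radical_reps n_gt0 trs).
Qed.
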